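(* Let $T$ be a set (of traits) with a binary relation $\preceq$ on $T$, and for every link $k$ and every $t\in T$ let $t\oplus k\subseteq T$ be a set of traits. Assume that for all $t_i,t_j\in T$ and every link $k$: if $t_i\preceq t_j$ then for every $t\in t_j\oplus k$ there exists $t'\in t_i\oplus k$ with $t'\preceq t$. Fix a link $k$ leaving the common end node of the two routes, and for a label $l=(t_1,t_2)$ whose both routes end at that node let $l\oplus e=\{(t,t_2): t\in t_1\oplus k\}\cup\{(t,t_1): t\in t_2\oplus k\}$ (the link may be appended to either route; the extended route's trait is listed first, and afterwards the routes end at different nodes). Let $l_i=(t_i,t'_i)$ and $l_j=(t_j,t'_j)$ be such labels. If $l_i\preceq_= l_j$, then for every $l\in l_j\oplus e$ there exists $l'\in l_i\oplus e$ with $l'\preceq_{\ne} l$.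
   Context: Setting: a network with nodes and links; a trait records the information needed to set up a connection along a route; $t\oplus k$ is the set of traits derived by appending link $k$ to a route with trait $t$; $\preceq$ means ''better than or equal to''. A label is a pair of traits of two link-disjoint routes. For labels $l_i=(t_i,t'_i)$, $l_j=(t_j,t'_j)$ whose both routes end at the same node: $l_i\preceq_n l_j$ iff $t_i\preceq t_j$ and $t'_i\preceq t'_j$; $l_i\preceq_x l_j$ iff $t_i\preceq t'_j$ and $t'_i\preceq t_j$; $l_i\preceq_= l_j$ iff $l_i\preceq_n l_j$ or $l_i\preceq_x l_j$. For labels $(a,b)$, $(c,d)$ whose routes end at different nodes: $(a,b)\preceq_{\ne}(c,d)$ iff $a\preceq c$ and $b\preceq d$. *)

Definition label_ext {T K : Type} (oplus : T -> K -> T -> Prop)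
  (l : T * T) (k : K) (m : T * T) : Prop :=
  (oplus (fst l) k (fst m) /\ snd m = snd l) \/
  (oplus (snd l) k (fst m) /\ snd m = fst l).

Definition le_n {T : Type} (le : T -> T -> Prop) (li lj : T * T) : Prop :=
  le (fst li) (fst lj) /\ le (snd li) (snd lj).
Definition le_x {T : Type} (le : T -> T -> Prop) (li lj : T * T) : Prop :=
  le (fst li) (snd lj) /\ le (snd li) (fst lj).
Definition le_eq {T : Type} (le : T -> T -> Prop) (li lj : T * T) : Prop :=
  le_n le li lj \/ le_x le li lj.
Definition le_ne {T : Type} (le : T -> T -> Prop) (l1 l2 : T * T) : Prop :=
  le (fst l1) (fst l2) /\ le (snd l1) (snd l2).


(* Extending the route of trait [c] of [lj] is matched by extending the route
   of [li] whose trait is below [c]; the other, unextended route then keeps a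
   trait below the one kept in [lj]. Crossed comparison only decides which route
   of [li] is extended, since [l (+) e] does not depend on the order of [l]. *)

Lemma label_ext_comm {T K : Type} (oplus : T -> K -> T -> Prop)
  (a b : T) (k : K) (m : T * T) :
  label_ext oplus (a, b) k m <-> label_ext oplus (b, a) k m.
Proof. unfold label_ext; simpl; tauto. Qed.

Lemma le_x_comm {T : Type} (le : T -> T -> Prop) (a b : T) (lj : T * T) :
  le_x le (a, b) lj <-> le_n le (b, a) lj.
Proof. unfold le_x, le_n; simpl; tauto. Qed.

Section LabelExtension.

Variables (T K : Type) (le : T -> T -> Prop) (oplus : T -> K -> T -> Prop).

Hypothesis oplus_mono : forall (ti tj : T) (k : K), le ti tj ->
  forall t, oplus tj k t -> exists t', oplus ti k t' /\ le t' t.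

Lemma oplus_le_ne (a b c d : T) (k : K) (t : T) :
  le a c -> le b d -> oplus c k t ->
  exists t', oplus a k t' /\ le_ne le (t', b) (t, d).
Proof.
  intros Hac Hbd Ht.
  destruct (oplus_mono a c k Hac t Ht) as [t' [Ht' Hle]].
  exists t'; split; [exact Ht' | split; assumption].
Qed.

Lemma label_ext_le_n (li lj : T * T) (k : K) :
  le_n le li lj ->
  forall l, label_ext oplus lj k l ->
  exists l', label_ext oplus li k l' /\ le_ne le l' l.
Proof.
  destruct li as [a b], lj as [c d]; unfold le_n, label_ext; simpl.
  intros [Hac Hbd] [t s] [[Ht Hs] | [Ht Hs]]; simpl in *; subst s.
  - destruct (oplus_le_ne a b c d k t Hac Hbd Ht) as [t' [Ht' Hle]].
    exists (t', b); simpl; auto.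
  - destruct (oplus_le_ne b a d c k t Hbd Hac Ht) as [t' [Ht' Hle]].
    exists (t', a); simpl; auto.
Qed.

End LabelExtension.

Theorem proposition3 (T K : Type) (le : T -> T -> Prop)
  (oplus : T -> K -> T -> Prop)
  (Hmono : forall (ti tj : T) (k : K), le ti tj ->
     forall t, oplus tj k t -> exists t', oplus ti k t' /\ le t' t)
  (k : K) (li lj : T * T) :
  le_eq le li lj ->
  forall l, label_ext oplus lj k l ->
  exists l', label_ext oplus li k l' /\ le_ne le l' l.
Proof.
  destruct li as [a b].
  intros [Hn | Hx] l Hl.
  - exact (label_ext_le_n T K le oplus Hmono (a, b) lj k Hn l Hl).
  - apply le_x_comm in Hx.
    destruct (label_ext_le_n T K le oplus Hmono (b, a) lj k Hx l Hl)
      as [l' [Hl' Hle]].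
    exists l'; split; [apply label_ext_comm; exact Hl' | exact Hle].
Qed.
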